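(* Let $\mathbb{K}$ be an ultrametric field and $\rho\in\mathbb{K}$ with $0<|\rho|<1$. Let $E$ be a metrizable (Hausdorff) topological $\mathbb{K}$-vector space, $U\subseteq E$ open, $x\in U$, and let $(x_n)_{n\in\mathbb{N}}$ and $(y_n)_{n\in\mathbb{N}}$ be sequences in $U$ converging to $x$. Then there exist an injective, monotonically increasing map $m\colon\mathbb{N}\to\mathbb{N}$, $k\mapsto m_k$, and a smooth curve $c\colon\mathbb{K}\to E$ with image in $U$ such that: (a) $c(\rho^k)=x_{m_k}$ for all odd $k\in\mathbb{N}$ and $c(\rho^k)=y_{m_k}$ for all even $k\in\mathbb{N}$; (b) $c(0)=x$; (c) $c|_{\mathbb{K}^\times}$ is locally constant; (d) if $t,s\in\mathbb{K}$ with $|t|=|s|$ then $c(t)=c(s)$; (e) $c(\mathbb{K}^\times)=\{c(\rho^k):k\in\mathbb{N}\}$.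
   Context: An ultrametric field is a field with a non-trivial absolute value satisfying $|x+y|\le\max\{|x|,|y|\}$. $\mathbb{N}=\{1,2,\dots\}$. Smoothness: for open $V$ in a topological $\mathbb{K}$-vector space $X$, $V^{[1]}:=\{(x,v,t)\in V\times X\times\mathbb{K}:x+tv\in V\}$; $g\colon V\to Y$ is $C^1$ if continuous and there is a continuous $g^{[1]}\colon V^{[1]}\to Y$ with $g(x+tv)-g(x)=t\,g^{[1]}(x,v,t)$; recursively $V^{[k+1]}=(V^{[k]})^{[1]}$, $g$ is $C^{k+1}$ if $C^k$ and $g^{[k]}$ is $C^1$, $g^{[k+1]}=(g^{[k]})^{[1]}$; smooth means $C^k$ for all $k$ (product topologies used). *)

From mathcomp Require Import all_boot all_order all_algebra.
From mathcomp Require Import boolp classical_sets reals.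
Set Implicit Arguments. Unset Strict Implicit. Unset Printing Implicit Defensive.
Import Order.TTheory GRing.Theory Num.Theory.
Local Open Scope ring_scope.
Local Open Scope classical_set_scope.

Section Ultrametric.
Variables (K : fieldType) (R : realType) (absK : K -> R).

Definition ultrametric_abs : Prop :=
  [/\ (forall x : K, 0 <= absK x),
      (forall x : K, absK x = 0 <-> x = 0),
      (forall x y : K, absK (x * y) = absK x * absK y),
      (forall x y : K, absK (x + y) <= Num.max (absK x) (absK y))
    & (exists x : K, absK x != 0 /\ absK x != 1)].

Variables (E : lmodType K) (d : E -> E -> R).

Definition is_metric : Prop :=
  [/\ (forall u v : E, 0 <= d u v),
      (forall u v : E, d u v = 0 <-> u = v),
      (forall u v : E, d u v = d v u)
    & (forall u v w : E, d u w <= d u v + d v w)].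

Definition tvs_metric : Prop :=
  [/\ is_metric,
      (forall (u v : E) (e : R), 0 < e -> exists2 del : R, 0 < del &
         forall u' v' : E, d u u' < del -> d v v' < del ->
           d (u + v) (u' + v') < e)
    & (forall (a : K) (u : E) (e : R), 0 < e -> exists2 del : R, 0 < del &
         forall (a' : K) (u' : E), absK (a - a') < del -> d u u' < del ->
           d (a *: u) (a' *: u') < e)].

Definition d_open (U : set E) : Prop :=
  forall u, U u -> exists2 r : R, 0 < r & forall v, d u v < r -> U v.

(* convergence of a sequence indexed by N = {1,2,...} (index 0 is ignored) *)
Definition d_converges (s : nat -> E) (l : E) : Prop :=
  forall e : R, 0 < e -> exists N : nat, forall n : nat, (N <= n)%N -> d (s n) l < e.

(* ---- iterated domains for smoothness of curves K -> E ----
   With V = K (open) and X = K we have V^[k] = Dk k (the whole space), where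
   D_0 = K and D_(k+1) = D_k x D_k x K. *)
Fixpoint Dk (k : nat) : Type :=
  match k with 0 => K | S k => (Dk k * Dk k * K)%type end.

Fixpoint addD (k : nat) : Dk k -> Dk k -> Dk k :=
  match k return Dk k -> Dk k -> Dk k with
  | 0 => fun a b : K => a + b
  | S k => fun p q => (addD p.1.1 q.1.1, addD p.1.2 q.1.2, p.2 + q.2)
  end.

Fixpoint scaleD (k : nat) (t : K) : Dk k -> Dk k :=
  match k return Dk k -> Dk k with
  | 0 => fun a : K => t * a
  | S k => fun p => (scaleD t p.1.1, scaleD t p.1.2, t * p.2)
  end.

(* max-metric on the finite product D_k; it induces the product topology *)
Fixpoint distD (k : nat) : Dk k -> Dk k -> R :=
  match k return Dk k -> Dk k -> R with
  | 0 => fun a b : K => absK (a - b)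
  | S k => fun p q => Num.max (Num.max (distD p.1.1 q.1.1) (distD p.1.2 q.1.2))
                              (absK (p.2 - q.2))
  end.

Definition continuousD (k : nat) (g : Dk k -> E) : Prop :=
  forall (p : Dk k) (e : R), 0 < e -> exists2 del : R, 0 < del &
    forall q : Dk k, distD p q < del -> d (g p) (g q) < e.

Definition smooth_curve (c : K -> E) : Prop :=
  exists G : forall k : nat, Dk k -> E,
    [/\ G 0%N = c,
        (forall k : nat, continuousD (G k))
      & (forall (k : nat) (p v : Dk k) (t : K),
           G k (addD p (scaleD t v)) - G k p = t *: G k.+1 (p, v, t))].

End Ultrametric.

From mathcomp Require Import all_boot all_order all_algebra.
From mathcomp Require Import boolp classical_sets reals.
From mathcomp Require Import ring lra zify.
Import Order.TTheory GRing.Theory Num.Theory.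
Set Implicit Arguments. Unset Strict Implicit. Unset Printing Implicit Defensive.
Local Open Scope ring_scope.
Local Open Scope classical_set_scope.

(* The curve is c(t) = x + sum_j [t in A_j] (z_j - x), where A_j (j >= 1) is the annulus
   |rho|^(j+1) < |t| <= |rho|^j (A_1 being unbounded) and z_j is x_(m_j) or y_(m_j)
   according to the parity of j; thus c is constant on each sphere |t| = r and
   c(rho^k) = z_k.
   The indicator of A_j is constant on balls of radius |rho|^(j+1), so its divided
   differences, computed with a cut-off so that only differences of size at least
   |rho|^(j+1) are divided by, are continuous, obey the divided-difference recursion and
   are bounded by |rho|^(-(j+1)k) in order k.  Any family of continuous maps obeying the
   recursion gives a smooth curve: the iterated difference quotients are finite sums of
   polynomials times members of the family.  Finally m_j grows so fast that the terms
   a (z_j - x) with |a| <= |rho|^(-(j+1)j) are summably small in E, which makes the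
   divided differences of c continuous also at tuples containing 0. *)

Section RealFacts.
Variable R : realType.

Lemma bernoulli_ineq (h : R) n : 0 <= h -> 1 + n%:R * h <= (1 + h) ^+ n.
Proof.
move=> h0; elim: n => [|n IH]; first by rewrite mul0r addr0 expr0.
have hn : 0 <= n%:R * h by rewrite mulr_ge0 ?ler0n.
have : (1 + h) * (1 + n%:R * h) <= (1 + h) * (1 + h) ^+ n by rewrite ler_wpM2l //; lra.
by rewrite exprS -natr1 mulrDl mul1r; nra.
Qed.

Lemma exprn_lt_eps (a e : R) : 0 <= a -> a < 1 -> 0 < e -> exists n, a ^+ n < e.
Proof.
move=> a0 a1 e0; have [->|an0] := eqVneq a 0; first by exists 1%N; rewrite expr1.
have ap : 0 < a by rewrite lt_neqAle eq_sym an0.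
have hp : 0 < a^-1 - 1 by rewrite subr_gt0 invf_gt1.
have hb : 0 <= e^-1 / (a^-1 - 1) by rewrite divr_ge0 // ?invr_ge0 ltW.
set n := Num.Def.archi_bound (e^-1 / (a^-1 - 1)); exists n.
have hn : e^-1 < n%:R * (a^-1 - 1) by rewrite -ltr_pdivrMr // archi_boundP.
have := bernoulli_ineq n (ltW hp); rewrite [1 + (_ - _)]addrC subrK exprVn => hB.
have : e^-1 < (a ^+ n)^-1 by lra.
by rewrite -[a ^+ n]invrK -[e]invrK ltf_pV2 ?posrE ?invr_gt0 ?exprn_gt0.
Qed.

End RealFacts.

Section Locally.
Variables (R : realType) (X : Type) (near : R -> X -> Prop).

Definition nbhs_mono := forall a b x, a <= b -> near a x -> near b x.

Definition locally (A : X -> Prop) := exists2 del, 0 < del & forall x, near del x -> A x.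

Definition cont_at (Y : Type) (dist : Y -> Y -> R) (F : X -> Y) (x0 : X) :=
  forall e, 0 < e -> locally (fun x => dist (F x0) (F x) < e).

Hypothesis hm : nbhs_mono.

Lemma locally_and (A B : X -> Prop) :
  locally A -> locally B -> locally (fun x => A x /\ B x).
Proof.
move=> [d1 d10 h1] [d2 d20 h2]; exists (Num.min d1 d2); first by rewrite lt_min d10.
by move=> x hx; split; [apply: h1 | apply: h2]; apply: hm hx; rewrite ge_min lexx ?orbT.
Qed.

Lemma locally_all (A : nat -> X -> Prop) n :
  (forall j, (j <= n)%N -> locally (A j)) ->
  locally (fun x => forall j, (j <= n)%N -> A j x).
Proof.
elim: n => [|n IH] H.
  have [del d0 h] := H 0%N (leqnn _).
  by exists del => // x hx j; rewrite leqn0 => /eqP ->; exact: h.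
have [del d0 h] := locally_and (IH (fun j hj => H j (leqW hj))) (H n.+1 (leqnn _)).
exists del => // x /h [hn hSn] j; rewrite leq_eqVlt => /orP [/eqP -> //|].
exact: hn.
Qed.

Lemma cont_at_near (Y : Type) (dist : Y -> Y -> R) (F G : X -> Y) x0 :
  locally (fun x => F x = G x) -> F x0 = G x0 ->
  cont_at dist G x0 -> cont_at dist F x0.
Proof.
move=> hFG h0 hG e e0; have [del d0 h] := locally_and hFG (hG e e0).
by exists del => // x /h [-> hx]; rewrite h0.
Qed.

End Locally.

Lemma cont_at_comp (R : realType) (X X' Y : Type) (near : R -> X -> Prop)
    (near' : R -> X' -> Prop) (dist : Y -> Y -> R) (T : X -> X') (F : X' -> Y) x0 :
  (forall del x, near del x -> near' del (T x)) ->
  cont_at near' dist F (T x0) -> cont_at near dist (fun x => F (T x)) x0.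
Proof. by move=> hT hF e /hF [del d0 h]; exists del => // x /hT /h. Qed.

Definition skip (T : Type) (y : nat -> T) (p : nat) : nat -> T := fun j => y (bump p j).

Lemma bump_leS p i : (bump p i <= i.+1)%N.
Proof. by rewrite /bump addnC -addn1 leq_add2l leq_b1. Qed.

(* [splice a b i] is [a 0, ..., a (i-1), b i, a i, b (i+1), b (i+2), ...]: removing
   entry i or i+1 leaves two consecutive stages of the path from b to a. *)
Definition splice (T : Type) (a b : nat -> T) (i j : nat) : T :=
  if (j < i)%N then a j else if j == i then b i else if j == i.+1 then a i else b j.-1.

Lemma skip_splice_l (T : Type) (a b : nat -> T) i j :
  skip (splice a b i) i j = if (j <= i)%N then a j else b j.
Proof.
rewrite /skip /splice /bump; case: (ltngtP j i) => [ji|ij|->].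
- by rewrite add0n ji.
- have -> : (j.+1 < i)%N = false by lia.
  have -> : (j.+1 == i) = false by lia.
  by rewrite add1n eqSS (gtn_eqF ij).
- by rewrite add1n ltnNge leqnSn /= (gtn_eqF (ltnSn i)) eqxx.
Qed.

Lemma skip_splice_r (T : Type) (a b : nat -> T) i j :
  skip (splice a b i) i.+1 j = if (j < i)%N then a j else b j.
Proof.
rewrite /skip /splice /bump; case: (ltngtP j i) => [ji|ij|->].
- by rewrite add0n ji.
- have -> : (j.+1 < i)%N = false by lia.
  have -> : (j.+1 == i) = false by lia.
  by rewrite add1n eqSS (gtn_eqF ij).
- by rewrite add0n ltnn eqxx.
Qed.

Section LagrangeDividedDifferences.
Variable K : fieldType.

Definition distinct_upto k (y : nat -> K) :=
  forall i j, (i <= k)%N -> (j <= k)%N -> i != j -> y i != y j.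

Lemma distinct_skip k y p : distinct_upto k.+1 y -> distinct_upto k (skip y p).
Proof.
move=> hd i j hi hj hij; apply: hd; try exact: leq_trans (bump_leS _ _) _.
by rewrite (inj_eq (can_inj (bumpK p))).
Qed.

Definition lagdiff (g : K -> K) (k : nat) (y : nat -> K) : K :=
  \sum_(l < k.+1) g (y l) / \prod_(m < k.+1 | m != l) (y l - y m).

Lemma lagdiff0 g y : lagdiff g 0 y = g (y 0%N).
Proof. by rewrite /lagdiff big_ord1 big1 ?invr1 ?mulr1 // => m; rewrite (ord1 m) eqxx. Qed.

Lemma eq_lagdiff g g' k y : (forall i, (i <= k)%N -> g (y i) = g' (y i)) ->
  lagdiff g k y = lagdiff g' k y.
Proof. by move=> h; apply: eq_bigr => l _; rewrite h // -ltnS. Qed.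

Lemma lagdiff_skip g k y (p : 'I_k.+2) : distinct_upto k.+1 y ->
  lagdiff g k (skip y p) =
  \sum_(l < k.+2) g (y l) * (y l - y p) / \prod_(m < k.+2 | m != l) (y l - y m).
Proof.
move=> hd; rewrite (bigD1_ord p) //= subrr mulr0 mul0r add0r.
apply: eq_bigr => i _; rewrite (bigD1_ord p) ?neq_lift //=.
have -> : \prod_(m < k.+1 | lift p m != lift p i) (y (lift p i) - y (lift p m)) =
    \prod_(m < k.+1 | m != i) (y (lift p i) - y (lift p m)).
  by apply: eq_bigl => m; rewrite (inj_eq lift_inj).
have hip : y (lift p i) - y p != 0.
  by rewrite subr_eq0; apply: hd; rewrite 1?eq_sym ?neq_lift // -ltnS ltn_ord.
by rewrite invfM mulrA mulfK.
Qed.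

Lemma lagdiff_rec g k y (p q : 'I_k.+2) : distinct_upto k.+1 y ->
  lagdiff g k (skip y p) - lagdiff g k (skip y q) = (y q - y p) * lagdiff g k.+1 y.
Proof.
move=> hd; rewrite !lagdiff_skip // -sumrB mulr_sumr; apply: eq_bigr => l _.
rewrite -!mulrA -mulrBr -mulrBl mulrCA; congr (_ * (_ * _)).
by rewrite opprB addrC addrA subrK.
Qed.

Lemma lagdiff_cst e k y : distinct_upto k.+1 y -> lagdiff (fun _ => e) k.+1 y = 0.
Proof.
elim: k y => [|k IH] y hd; have := lagdiff_rec (fun _ => e) ord0 ord_max hd;
  [rewrite !lagdiff0 | rewrite !IH; try exact: distinct_skip];
  rewrite subrr => /esym/eqP; rewrite mulf_eq0 subr_eq0 => /orP[/eqP h|/eqP //];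
  by have := hd _ 0%N (leqnn _) (leq0n _) isT; rewrite /= h eqxx.
Qed.

End LagrangeDividedDifferences.

Section UltrametricField.
Variables (K : fieldType) (R : realType) (absK : K -> R).
Hypothesis hK : ultrametric_abs absK.

Lemma absK_ge0 a : 0 <= absK a.
Proof. by case: hK. Qed.

Lemma absK_eq0 a : absK a = 0 <-> a = 0.
Proof. by case: hK. Qed.

Lemma absKM a b : absK (a * b) = absK a * absK b.
Proof. by case: hK. Qed.

Lemma absKD a b : absK (a + b) <= Num.max (absK a) (absK b).
Proof. by case: hK. Qed.

Lemma absK0 : absK 0 = 0.
Proof. exact/absK_eq0. Qed.

Lemma absK_gt0 a : a != 0 -> 0 < absK a.
Proof.
by move=> a0; rewrite lt_def absK_ge0 andbT; apply: contra a0 => /eqP/absK_eq0 ->.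
Qed.

Lemma absK1 : absK 1 = 1.
Proof.
have h1 : 0 < absK 1 := absK_gt0 (oner_neq0 K).
by apply: (mulIf (lt0r_neq0 h1)); rewrite mul1r -absKM mulr1.
Qed.

Lemma absKN a : absK (- a) = absK a.
Proof.
have : absK (- a) ^+ 2 = absK a ^+ 2 by rewrite !expr2 -!absKM mulrNN.
by move/eqP; rewrite eqrXn2 ?absK_ge0 // => /eqP.
Qed.

Lemma absK_distC a b : absK (a - b) = absK (b - a).
Proof. by rewrite -absKN opprB. Qed.

Lemma absKV a : absK a^-1 = (absK a)^-1.
Proof.
have [->|a0] := eqVneq a 0; first by rewrite invr0 absK0 invr0.
apply: (mulfI (lt0r_neq0 (absK_gt0 a0))).
by rewrite -absKM !mulfV ?absK1 // lt0r_neq0 // absK_gt0.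
Qed.

Lemma absKX a n : absK (a ^+ n) = absK a ^+ n.
Proof. by elim: n => [|n IH]; rewrite ?expr0 ?absK1 // !exprS absKM IH. Qed.

Lemma absKD_lt a b e : absK a < e -> absK b < e -> absK (a + b) < e.
Proof. by move=> ha hb; apply: le_lt_trans (absKD a b) _; rewrite gt_max ha. Qed.

Lemma absKD_le a b e : absK a <= e -> absK b <= e -> absK (a + b) <= e.
Proof. by move=> ha hb; apply: le_trans (absKD a b) _; rewrite ge_max ha. Qed.

Lemma absKB_lt a b e : absK a < e -> absK b < e -> absK (a - b) < e.
Proof. by move=> ha hb; apply: absKD_lt; rewrite ?absKN. Qed.

Lemma absKD_dom a b : absK b < absK a -> absK (a + b) = absK a.
Proof.
move=> ba; apply/eqP; rewrite eq_le; apply/andP; split.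
  by apply: le_trans (absKD a b) _; rewrite ge_max lexx ltW.
have := absKD (a + b) (- b); rewrite addrK absKN le_max.
by case/orP=> // /(lt_le_trans ba); rewrite ltxx.
Qed.

Lemma absK_close a b : absK (a - b) < absK a -> absK b = absK a.
Proof. by move=> h; rewrite -[b](subKr a) absKD_dom ?absKN. Qed.

Lemma absK_small e : 0 < e -> exists2 a, a != 0 & absK a < e.
Proof.
case: hK => _ _ _ _ [a [a0 a1]] e0.
have a0' : a != 0 by apply: contra a0 => /eqP ->; rewrite absK0.
have [b [b0 b1]] : exists b, b != 0 /\ absK b < 1.
  case: (ltP (absK a) 1) => ha; first by exists a.
  exists a^-1; rewrite invr_eq0 absKV invf_lt1 ?absK_gt0 //.
  by rewrite lt_def a1 ha.
have [n hn] := exprn_lt_eps (absK_ge0 b) b1 e0.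
by exists (b ^+ n); rewrite ?expf_neq0 ?absKX.
Qed.

Lemma ler_absK_near r a b : absK (a - b) < r -> (r <= absK a) = (r <= absK b).
Proof.
move=> h; apply/idP/idP => hr.
  by rewrite (absK_close (lt_le_trans h hr)).
by rewrite (absK_close (a := b) (b := a)) // absK_distC (lt_le_trans h hr).
Qed.

Local Notation distK := (fun a b : K => absK (a - b)).

Section ContinuityK.
Variables (X : Type) (near : R -> X -> Prop).
Hypothesis hm : nbhs_mono near.

Lemma contK_cst c x0 : cont_at near distK (fun _ => c) x0.
Proof. by move=> e e0; exists 1 => // x _; rewrite subrr absK0. Qed.

Lemma contK_add F G x0 : cont_at near distK F x0 -> cont_at near distK G x0 ->
  cont_at near distK (fun x => F x + G x) x0.
Proof.
move=> hF hG e e0; have [del d0 h] := locally_and hm (hF e e0) (hG e e0).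
by exists del => // x /h [h1 h2]; rewrite opprD addrACA; apply: absKD_lt.
Qed.

Lemma contK_opp F x0 : cont_at near distK F x0 -> cont_at near distK (fun x => - F x) x0.
Proof. by move=> hF e /hF [del d0 h]; exists del => // x /h; rewrite -opprD absKN. Qed.

Lemma contK_sub F G x0 : cont_at near distK F x0 -> cont_at near distK G x0 ->
  cont_at near distK (fun x => F x - G x) x0.
Proof. by move=> hF hG; apply: contK_add => //; apply: contK_opp. Qed.

Lemma contK_mul F G x0 : cont_at near distK F x0 -> cont_at near distK G x0 ->
  cont_at near distK (fun x => F x * G x) x0.
Proof.
move=> hF hG e e0.
set M := absK (F x0) + absK (G x0) + 1.
have hF0 := absK_ge0 (F x0); have hG0 := absK_ge0 (G x0).
have M0 : 0 < M by rewrite /M; lra.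
have eM : e / M * M = e by rewrite mulfVK // lt0r_neq0.
have e'0 : 0 < Num.min 1 (e / M) by rewrite lt_min ltr01 divr_gt0.
have [del d0 h] := locally_and hm (hF _ e'0) (hG _ e'0).
exists del => // x /h []; rewrite !lt_min => /andP [hF1 hFe] /andP [_ hGe].
have hFx : absK (F x) <= M.
  rewrite -[F x](subKr (F x0)); apply: absKD_le; rewrite ?absKN /M; lra.
have -> : F x0 * G x0 - F x * G x = (F x0 - F x) * G x0 + F x * (G x0 - G x) by ring.
apply: absKD_lt; rewrite absKM.
  by have := absK_ge0 (F x0 - F x); rewrite /M in eM hFe *; nra.
by have := absK_ge0 (G x0 - G x); have := absK_ge0 (F x); nra.
Qed.

Lemma contK_inv F x0 : F x0 != 0 -> cont_at near distK F x0 ->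
  cont_at near distK (fun x => (F x)^-1) x0.
Proof.
move=> hn hF e e0; set f := absK (F x0).
have f0 : 0 < f := absK_gt0 hn.
have [del d0 h] := hF (Num.min f (e * f * f)) ltac:(by rewrite lt_min f0 !mulr_gt0).
exists del => // x /h; rewrite lt_min => /andP [h1 h2].
have hx : absK (F x) = f := absK_close h1.
have hxn : F x != 0 by apply/eqP => hx0; move: f0; rewrite -hx hx0 absK0 ltxx.
have -> : (F x0)^-1 - (F x)^-1 = (F x - F x0) / (F x0 * F x) by field; rewrite hn hxn.
by rewrite absKM absK_distC absKV absKM hx ltr_pdivrMr ?mulr_gt0 // mulrA.
Qed.

End ContinuityK.

Definition near_upto (n : nat) (y0 : nat -> K) (del : R) (y : nat -> K) :=
  forall i, (i <= n)%N -> absK (y0 i - y i) < del.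

Lemma near_upto_mono n y0 : nbhs_mono (near_upto n y0).
Proof. by move=> a b y hab h i hi; apply: lt_le_trans (h i hi) hab. Qed.

Lemma near_upto_le m n y0 del y :
  (m <= n)%N -> near_upto n y0 del y -> near_upto m y0 del y.
Proof. by move=> hmn h i hi; apply: h; apply: leq_trans hmn. Qed.

Lemma near_upto_skip k y0 del y p :
  near_upto k.+1 y0 del y -> near_upto k (skip y0 p) del (skip y p).
Proof. by move=> h j hj; apply: h; apply: leq_trans (bump_leS _ _) _. Qed.

Lemma contK_coord n y0 i : (i <= n)%N -> cont_at (near_upto n y0) distK (fun y => y i) y0.
Proof. by move=> hi e e0; exists e => // y /(_ i hi). Qed.

Lemma exists_distinct_near n y0 del : 0 < del ->
  exists y, near_upto n y0 del y /\ distinct_upto n y.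
Proof.
move=> d0; elim: n => [|n [y [hy hd]]].
  exists y0; split; first by move=> i _; rewrite subrr absK0.
  by move=> i j; rewrite !leqn0 => /eqP -> /eqP ->; rewrite eqxx.
set c := y0 n.+1.
set b := \big[Num.min/del]_(i < n.+1 | y i != c) absK (y i - c).
have b0 : 0 < b by apply: lt_bigmin => // i; rewrite -subr_eq0; apply: absK_gt0.
have hb i : (i <= n)%N -> y i != c -> b <= absK (y i - c).
  by rewrite -ltnS => hi; apply: (bigmin_le_cond _ (j := Ordinal hi)).
have [a a0 ha] := absK_small b0.
have hz i : (i <= n)%N -> y i != c + a.
  move=> hi; have [->|yc] := eqVneq (y i) c.
    by rewrite -subr_eq0 opprD addNKr oppr_eq0.
  rewrite -subr_eq0; apply/eqP => h0.
  have : absK (y i - (c + a)) = absK (y i - c).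
    rewrite opprD addrA (absKD_dom (a := y i - c)) // absKN.
    exact: lt_le_trans ha (hb i hi yc).
  by rewrite h0 absK0 => /esym/absK_eq0/eqP; rewrite subr_eq0 (negbTE yc).
exists (fun i => if i == n.+1 then c + a else y i); split.
  move=> i; rewrite leq_eqVlt => /orP [/eqP ->|hi]; last by rewrite ltn_eqF //; apply: hy.
  by rewrite eqxx opprD addNKr absKN; apply: lt_le_trans ha _; apply: bigmin_le_id.
move=> i j hi hj; case: (eqVneq i n.+1) => [ei|ni]; case: (eqVneq j n.+1) => [ej|nj].
- by rewrite ei ej eqxx.
- by move=> _; rewrite eq_sym; apply: hz; rewrite -ltnS ltn_neqAle nj hj.
- by move=> _; apply: hz; rewrite -ltnS ltn_neqAle ni hi.
- by apply: hd; rewrite -ltnS ltn_neqAle ?ni ?nj.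
Qed.

Lemma cont_eq0_distinct k (F : (nat -> K) -> K) y :
  cont_at (near_upto k y) distK F y -> (forall z, distinct_upto k z -> F z = 0) -> F y = 0.
Proof.
move=> hF h0; apply/eqP/negPn/negP => hne.
have [del d0 hdel] := hF _ (absK_gt0 hne).
have [z [hz dz]] := exists_distinct_near k y d0.
by have := hdel z hz; rewrite (h0 z dz) subr0 ltxx.
Qed.

Section CutoffDividedDifferences.
Variables (r : R) (f : K -> K).

(* If no earlier point is r-far from the last one, all points lie in one ball of
   radius r, on which f will be assumed constant, so the divided difference is 0.
   Dividing only by r-far differences makes ddiff continuous everywhere. *)
Fixpoint ddiff (k : nat) (y : nat -> K) : K :=
  match k with
  | 0 => f (y 0%N)
  | k'.+1 =>
    if [pick p : 'I_k'.+1 | r <= absK (y p - y k'.+1)] is Some p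
    then (ddiff k' (skip y p) - ddiff k' y) / (y k'.+1 - y p)
    else 0
  end.

Lemma eq_ddiff k y y' : (forall i, (i <= k)%N -> y i = y' i) -> ddiff k y = ddiff k y'.
Proof.
elim: k y y' => [|k IH] y y' H /=; first by rewrite H.
have -> : [pick p : 'I_k.+1 | r <= absK (y p - y k.+1)] =
          [pick p : 'I_k.+1 | r <= absK (y' p - y' k.+1)].
  by apply: eq_pick => p; rewrite /= !H // ltnW.
case: pickP => // p _; have hp : (p <= k.+1)%N := ltnW (ltn_ord p).
rewrite (IH (skip y p) (skip y' p)) => [|i hi]; last first.
  by apply: H; apply: leq_trans (bump_leS _ _) _.
by rewrite (IH y y') => [|i hi]; [rewrite !H | apply: H; apply: leqW].
Qed.

Lemma ddiff_skip_last k y : ddiff k y = ddiff k (skip y k.+1).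
Proof. by apply: eq_ddiff => i hi; rewrite /skip /bump ltnNge hi. Qed.

Hypotheses (r0 : 0 < r) (f_lc : forall a b, absK (a - b) < r -> f a = f b).

Lemma ddiff_cont k y0 : cont_at (near_upto k y0) distK (ddiff k) y0.
Proof.
elim: k y0 => [|k IH] y0.
  by move=> e e0; exists r => // y /(_ 0%N (leqnn _)) /f_lc /= ->; rewrite subrr absK0.
have hm : nbhs_mono (near_upto k.+1 y0) := @near_upto_mono _ _.
have hpick : locally (near_upto k.+1 y0) (fun y =>
    [pick p : 'I_k.+1 | r <= absK (y p - y k.+1)] =
    [pick p : 'I_k.+1 | r <= absK (y0 p - y0 k.+1)]).
  exists r => // y hy; apply: eq_pick => p /=; apply: ler_absK_near.
  have -> : y p - y k.+1 - (y0 p - y0 k.+1) = (y0 k.+1 - y k.+1) - (y0 p - y p) by ring.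
  by apply: absKB_lt; apply: hy; rewrite // ltnW.
case hp0 : [pick p : 'I_k.+1 | r <= absK (y0 p - y0 k.+1)] => [p|]; last first.
  apply: (cont_at_near hm (G := fun _ => 0)); last exact: contK_cst.
    by case: hpick => del d0 h; exists del => // y /h /= ->; rewrite hp0.
  by rewrite /= hp0.
have hp : r <= absK (y0 p - y0 k.+1) by move: hp0; case: pickP => // p' hp' [<-].
apply: (cont_at_near hm
  (G := fun y => (ddiff k (skip y p) - ddiff k y) / (y k.+1 - y p))) => //.
- by case: hpick => del d0 h; exists del => // y /h /= ->; rewrite hp0.
- by rewrite /= hp0.
apply: (contK_mul hm); first apply: (contK_sub hm).
- apply: (cont_at_comp (T := fun y => skip y p) _ (IH (skip y0 p))) => del y.
  exact: near_upto_skip.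
- apply: (cont_at_comp (T := id) _ (IH y0)) => del y; exact: near_upto_le.
apply: contK_inv.
  rewrite subr_eq0 eq_sym; apply: contraTneq hp => ->.
  by rewrite subrr absK0 -ltNge.
by apply: (contK_sub hm); apply: contK_coord; rewrite // ltnW.
Qed.

Lemma ddiff_lagdiff k y : distinct_upto k y -> ddiff k y = lagdiff f k y.
Proof.
elim: k y => [|k IH] y hd /=; first by rewrite lagdiff0.
case: pickP => [p _|hfar].
  have hyp : y k.+1 - y p != 0.
    by rewrite subr_eq0; apply: hd; rewrite ?(gtn_eqF (ltn_ord p)) // ltnW.
  rewrite [ddiff k y]ddiff_skip_last !IH; try exact: distinct_skip.
  have := lagdiff_rec f (widen_ord (leqnSn _) p) ord_max hd; rewrite /= => ->.
  by rewrite mulrC mulKf.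
rewrite (@eq_lagdiff _ f (fun _ => f (y k.+1))) ?lagdiff_cst // => i.
rewrite leq_eqVlt => /orP [/eqP -> //|hi]; apply: f_lc.
by have := hfar (Ordinal hi); rewrite /= => /negbT; rewrite -ltNge.
Qed.

(* True on tuples of distinct points by the Lagrange formula, hence everywhere by
   continuity and density. *)
Lemma ddiff_rec k y i : (i <= k)%N ->
  ddiff k (skip y i) - ddiff k (skip y i.+1) = (y i.+1 - y i) * ddiff k.+1 y.
Proof.
move=> hi; apply/eqP; rewrite -subr_eq0; apply/eqP.
have hm : nbhs_mono (near_upto k.+1 y) := @near_upto_mono _ _.
apply: (cont_eq0_distinct (F := fun z =>
  ddiff k (skip z i) - ddiff k (skip z i.+1) - (z i.+1 - z i) * ddiff k.+1 z)).
  apply: (contK_sub hm); first apply: (contK_sub hm).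
  1,2: apply: (cont_at_comp (T := fun z => skip z _) _ (ddiff_cont _ _));
    by move=> del z; apply: near_upto_skip.
  apply: (contK_mul hm) (ddiff_cont _ _).
  by apply: (contK_sub hm); apply: contK_coord; rewrite // leqW.
move=> z hz; apply/eqP; rewrite subr_eq0; apply/eqP.
rewrite !ddiff_lagdiff //; try exact: distinct_skip.
have hi1 : (i < k.+2)%N by rewrite ltnS leqW.
have hi2 : (i.+1 < k.+2)%N by rewrite ltnS.
exact: (lagdiff_rec f (Ordinal hi1) (Ordinal hi2) hz).
Qed.

Lemma ddiff_eq0 k y : (forall i, (i <= k)%N -> f (y i) = 0) -> ddiff k y = 0.
Proof.
elim: k y => [|k IH] y H /=; first exact: H.
case: pickP => // p _.
rewrite (IH y) => [|i hi]; last by apply: H; apply: leqW.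
rewrite IH ?subrr ?mul0r // => i hi; apply: H; exact: leq_trans (bump_leS _ _) _.
Qed.

Hypothesis f_bnd : forall a, absK (f a) <= 1.

Lemma ddiff_bound k y : absK (ddiff k y) <= r^-1 ^+ k.
Proof.
elim: k y => [|k IH] y /=; first by rewrite expr0.
case: pickP => [p hp|_]; last by rewrite absK0 exprn_ge0 // invr_ge0 ltW.
rewrite absKM absKV exprSr; apply: ler_pM; rewrite ?absK_ge0 ?invr_ge0 ?absK_ge0 //.
  by apply: absKD_le; rewrite ?absKN IH.
have hpos : 0 < absK (y k.+1 - y p) by rewrite absK_distC; exact: lt_le_trans r0 hp.
by rewrite lef_pV2 ?posrE // absK_distC.
Qed.

End CutoffDividedDifferences.

Definition nearD n (p0 : Dk K n) (del : R) (q : Dk K n) := distD absK p0 q < del.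

Lemma nearD_mono n p0 : nbhs_mono (@nearD n p0).
Proof. by move=> a b q hab h; apply: lt_le_trans h hab. Qed.

Local Unset Implicit Arguments.
Inductive coordfun : forall n, (Dk K n -> K) -> Prop :=
| coordfun0 : coordfun 0%N (fun a : Dk K 0 => a)
| coordfun_l n L : coordfun n L -> coordfun n.+1 (fun p : Dk K n.+1 => L p.1.1)
| coordfun_r n L : coordfun n L -> coordfun n.+1 (fun p : Dk K n.+1 => L p.1.2)
| coordfun_t n : coordfun n.+1 (fun p : Dk K n.+1 => p.2).

Inductive polyfun (n : nat) : (Dk K n -> K) -> Prop :=
| polyfun_cst c : polyfun n (fun _ => c)
| polyfun_coord L : coordfun n L -> polyfun n L
| polyfunD f g : polyfun n f -> polyfun n g -> polyfun n (fun p => f p + g p)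
| polyfunM f g : polyfun n f -> polyfun n g -> polyfun n (fun p => f p * g p).
Local Set Implicit Arguments.

Lemma coordfunD n L : coordfun n L -> forall p q, L (addD p q) = L p + L q.
Proof. by elim=> //=. Qed.

Lemma coordfunZ n L : coordfun n L -> forall t p, L (scaleD t p) = t * L p.
Proof. by elim=> //=. Qed.

Lemma coordfun_dist n L : coordfun n L -> forall p q, absK (L p - L q) <= distD absK p q.
Proof.
elim=> [p q|m L0 _ IH p q|m L0 _ IH p q|m p q] /=.
- exact: lexx.
- by apply: le_trans (IH _ _) _; rewrite !le_max lexx.
- by apply: le_trans (IH _ _) _; rewrite !le_max lexx !orbT.
- by rewrite le_max lexx orbT.
Qed.

Lemma polyfun_ext n f g : polyfun n f -> f =1 g -> polyfun n g.
Proof. by move=> hf /funext <-. Qed.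

Lemma polyfun_lift n f : polyfun n f -> polyfun n.+1 (fun q : Dk K n.+1 => f q.1.1).
Proof.
by elim=> [c|L hL|f1 g1 _ h1 _ h2|f1 g1 _ h1 _ h2];
  constructor => //; apply: coordfun_l.
Qed.

Definition shiftD n (q : Dk K n.+1) : Dk K n := addD q.1.1 (scaleD q.2 q.1.2).

Lemma polyfun_shift n f : polyfun n f -> polyfun n.+1 (fun q => f (shiftD q)).
Proof.
elim=> [c|L hL|f1 g1 _ h1 _ h2|f1 g1 _ h1 _ h2]; try by constructor.
apply: (@polyfun_ext _ (fun q : Dk K n.+1 => L q.1.1 + q.2 * L q.1.2)).
  apply: polyfunD; first by apply/polyfun_coord/coordfun_l.
  by apply: polyfunM; apply: polyfun_coord; [apply: coordfun_t | apply: coordfun_r].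
by move=> q; rewrite /shiftD coordfunD // coordfunZ.
Qed.

Lemma polyfun_splice n (A B : nat -> Dk K n -> K) i j :
  (forall j, polyfun n (A j)) -> (forall j, polyfun n (B j)) ->
  polyfun n (fun q => splice (A^~ q) (B^~ q) i j).
Proof.
move=> hA hB; rewrite /splice.
by case: (j < i)%N; case: (j == i); case: (j == i.+1).
Qed.

Lemma polyfun_diff n f : polyfun n f -> exists f', polyfun n.+1 f' /\
  forall p v t, f (addD p (scaleD t v)) - f p = t * f' (p, v, t).
Proof.
elim=> [c|L hL|f1 g1 _ [f1' [h1 e1]] _ [g1' [h2 e2]]|
         f1 g1 hf1 [f1' [h1 e1]] hg1 [g1' [h2 e2]]].
- by exists (fun _ => 0); split; [constructor | move=> *; rewrite subrr mulr0].
- exists (fun q : Dk K n.+1 => L q.1.2); split; first by apply/polyfun_coord/coordfun_r.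
  by move=> p v t; rewrite /= coordfunD // coordfunZ // addrC addKr.
- exists (fun q => f1' q + g1' q); split; first exact: polyfunD.
  by move=> p v t; rewrite mulrDr -e1 -e2 opprD addrACA.
exists (fun q => f1' q * g1 (shiftD q) + f1 q.1.1 * g1' q); split.
  by apply: polyfunD; apply: polyfunM => //; [apply: polyfun_shift | apply: polyfun_lift].
move=> p v t; rewrite /shiftD /= mulrDr mulrA -e1 mulrCA -e2; ring.
Qed.

Lemma polyfun_cont n f : polyfun n f -> forall p0, cont_at (@nearD n p0) distK f p0.
Proof.
elim=> [c|L hL|f1 g1 _ h1 _ h2|f1 g1 _ h1 _ h2] p0.
- exact: contK_cst.
- by move=> e e0; exists e => // q hq; apply: le_lt_trans (coordfun_dist hL _ _) hq.
- exact: (contK_add (@nearD_mono n p0)).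
- exact: (contK_mul (@nearD_mono n p0)).
Qed.

Section MetricVectorSpace.
Variables (E : lmodType K) (d : E -> E -> R).
Hypothesis hE : tvs_metric absK d.

Lemma metric_refl u : d u u = 0.
Proof. by case: hE => -[_ h _ _] _ _; apply/h. Qed.

Lemma metric_sym u v : d u v = d v u.
Proof. by case: hE => -[_ _ h _] _ _. Qed.

Lemma add_cont (u v : E) (e : R) : 0 < e -> exists2 del : R, 0 < del &
  forall u' v' : E, d u u' < del -> d v v' < del -> d (u + v) (u' + v') < e.
Proof. by case: hE => _ h _; apply: h. Qed.

Lemma scale_cont (a : K) (u : E) (e : R) : 0 < e -> exists2 del : R, 0 < del &
  forall (a' : K) (u' : E), absK (a - a') < del -> d u u' < del ->
    d (a *: u) (a' *: u') < e.
Proof. by case: hE => _ _ h; apply: h. Qed.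

Section ContinuityE.
Variables (X : Type) (near : R -> X -> Prop).
Hypothesis hm : nbhs_mono near.

Lemma contE_cst u x0 : cont_at near d (fun _ => u) x0.
Proof. by move=> e e0; exists 1 => // x _; rewrite metric_refl. Qed.

Lemma contE_add G H x0 : cont_at near d G x0 -> cont_at near d H x0 ->
  cont_at near d (fun x => G x + H x) x0.
Proof.
move=> hG hH e /(add_cont (G x0) (H x0)) [del d0 h].
have [del' d1 h'] := locally_and hm (hG del d0) (hH del d0).
by exists del' => // x /h' [h1 h2]; apply: h.
Qed.

Lemma contE_scale F G x0 : cont_at near distK F x0 -> cont_at near d G x0 ->
  cont_at near d (fun x => F x *: G x) x0.
Proof.
move=> hF hG e /(scale_cont (F x0) (G x0)) [del d0 h].
have [del' d1 h'] := locally_and hm (hF del d0) (hG del d0).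
by exists del' => // x /h' [h1 h2]; apply: h.
Qed.

End ContinuityE.

Section SmoothFromDividedDifferences.
Variable Phi : nat -> (nat -> K) -> E.
Hypotheses (Phi_cont : forall k y0, cont_at (near_upto k y0) d (Phi k) y0)
  (eq_Phi : forall k y y', (forall i, (i <= k)%N -> y i = y' i) -> Phi k y = Phi k y')
  (Phi_rec : forall k y i, (i <= k)%N ->
     Phi k (skip y i) - Phi k (skip y i.+1) = (y i.+1 - y i) *: Phi k.+1 y).

Lemma Phi_telescope k (a b : nat -> K) :
  Phi k a - Phi k b = \sum_(i < k.+1) (a i - b i) *: Phi k.+1 (splice a b i).
Proof.
pose mix i j := if (j < i)%N then a j else b j.
have -> : Phi k a = Phi k (mix k.+1) by apply: eq_Phi => j hj; rewrite /mix ltnS hj.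
have -> : Phi k b = Phi k (mix 0%N) by apply: eq_Phi.
rewrite -(telescope_sumr (fun i => Phi k (mix i)) (leq0n k.+1)) big_mkord.
apply: eq_bigr => i _.
rewrite (@eq_Phi k (mix i.+1) (skip (splice a b i) i)) => [|j _]; last first.
  by rewrite skip_splice_l /mix ltnS.
rewrite (@eq_Phi k (mix i) (skip (splice a b i) i.+1)) => [|j _]; last first.
  by rewrite skip_splice_r.
rewrite Phi_rec; last by rewrite -ltnS.
congr (_ *: _).
by rewrite /splice ltnn eqxx ltnNge leqnSn /= (gtn_eqF (ltnSn i)) eqxx.
Qed.

(* All iterated difference quotients of [fun t => Phi 0 (fun _ => t)] lie in this
   class, which is stable under difference quotients and consists of continuous maps. *)
Local Unset Implicit Arguments.
Inductive ddterm (n : nat) : (Dk K n -> E) -> Prop :=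
| ddterm0 : ddterm n (fun _ => 0)
| ddtermD g h : ddterm n g -> ddterm n h -> ddterm n (fun p => g p + h p)
| ddtermZ k phi P : polyfun n phi -> (forall j, polyfun n (P j)) ->
    ddterm n (fun p => phi p *: Phi k (fun j => P j p)).
Local Set Implicit Arguments.
Arguments ddterm0 {n}. Arguments ddtermD {n g h}. Arguments ddtermZ {n} k {phi P}.

Lemma ddterm_ext n g h : ddterm n g -> g =1 h -> ddterm n h.
Proof. by move=> hg /funext <-. Qed.

Lemma ddterm_sum n m (g : 'I_m -> Dk K n -> E) : (forall i, ddterm n (g i)) ->
  ddterm n (fun p => \sum_(i < m) g i p).
Proof.
elim: m g => [|m IH] g H; first by apply: (ddterm_ext ddterm0) => p; rewrite big_ord0.
have hg := IH (fun i => g (widen_ord (leqnSn m) i)) (fun i => H _).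
by apply: (ddterm_ext (ddtermD hg (H ord_max))) => p; rewrite big_ord_recr.
Qed.

Lemma ddterm_cont n g : ddterm n g -> forall p0, cont_at (nearD p0) d g p0.
Proof.
have hm := @nearD_mono n.
elim=> [|g1 h1 _ IH1 _ IH2|k phi P hphi hP] p0.
- exact: contE_cst.
- exact: (contE_add (hm p0)).
apply: (contE_scale (hm p0) (polyfun_cont hphi p0)).
move=> e /(Phi_cont k (fun j => P j p0)) [del d0 h].
have [del' d1 h'] := locally_all (n := k) (A := fun j q => absK (P j p0 - P j q) < del)
  (hm p0) (fun j _ => polyfun_cont (hP j) p0 d0).
by exists del' => // q /h' hq; apply: h.
Qed.

Lemma ddterm_diff n g : ddterm n g -> exists g', ddterm n.+1 g' /\
  forall p v t, g (addD p (scaleD t v)) - g p = t *: g' (p, v, t).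
Proof.
elim=> [|g1 h1 _ [g1' [t1 e1]] _ [h1' [t2 e2]]|k phi P hphi hP].
- exists (fun _ => 0); split; [exact: ddterm0 | by move=> *; rewrite subrr scaler0].
- exists (fun q => g1' q + h1' q); split; first exact: ddtermD.
  by move=> p v t; rewrite scalerDr -e1 -e2 opprD addrACA.
have [phi' [hphi' ephi]] := polyfun_diff hphi.
have [P' hP'] : {P' : nat -> Dk K n.+1 -> K & forall j, polyfun n.+1 (P' j) /\
    forall p v t, P j (addD p (scaleD t v)) - P j p = t * P' j (p, v, t)}.
  exact: (choice (fun j => polyfun_diff (hP j))).
pose S (q : Dk K n.+1) j := P j (shiftD q).
pose B (q : Dk K n.+1) j := P j q.1.1.
exists (fun q => phi' q *: Phi k (S q) +
  \sum_(i < k.+1) (phi q.1.1 * P' i q) *: Phi k.+1 (splice (S q) (B q) i)); split.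
  apply: ddtermD; first by apply: ddtermZ => // j; apply: polyfun_shift.
  have hQ i j : polyfun n.+1 (fun q => splice (S q) (B q) i j).
    by apply: polyfun_splice => j'; [apply: polyfun_shift | apply: polyfun_lift].
  apply: ddterm_sum => i; apply: ddtermZ => [|j]; last exact: hQ.
  by apply: polyfunM; [apply: polyfun_lift | case: (hP' i)].
move=> p v t; rewrite /S /B /shiftD /=.
set Sp := addD p (scaleD t v).
have -> : phi Sp = phi p + t * phi' (p, v, t) by rewrite -ephi addrC subrK.
rewrite scalerDl addrAC -scalerBr addrC Phi_telescope scalerDr scalerA; congr (_ + _).
rewrite !scaler_sumr; apply: eq_bigr => i _.
by case: (hP' i) => _ ->; rewrite !scalerA mulrCA.
Qed.

Lemma ddterm_curve : ddterm 0 (fun t : Dk K 0 => Phi 0 (fun _ => t)).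
Proof.
apply: (ddterm_ext (@ddtermZ 0 0 (fun _ => 1) (fun _ t => t) (polyfun_cst _ _) _)).
  by move=> j; apply: polyfun_coord; constructor.
by move=> t; rewrite scale1r.
Qed.

Fixpoint ddtower (n : nat) : {g : Dk K n -> E | ddterm n g} :=
  match n with
  | 0 => exist _ _ ddterm_curve
  | n'.+1 =>
    let w := cid (ddterm_diff (svalP (ddtower n'))) in exist _ (sval w) (proj1 (svalP w))
  end.

Theorem ddfamily_smooth : smooth_curve absK d (fun t => Phi 0 (fun _ => t)).
Proof.
exists (fun n => sval (ddtower n)); split => // [k p e e0|k p v t].
  exact: ddterm_cont (svalP (ddtower k)) p e e0.
exact: (proj2 (svalP (cid (ddterm_diff (svalP (ddtower k)))))).
Qed.

End SmoothFromDividedDifferences.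

End MetricVectorSpace.

Section Annuli.
Variable rho : K.
Hypotheses (hrho0 : 0 < absK rho) (hrho1 : absK rho < 1).
Local Notation q := (absK rho).

Lemma q_anti m n : (m <= n)%N -> q ^+ n <= q ^+ m.
Proof. by move=> hmn; apply: ler_wiXn2l => //; apply: ltW. Qed.

(* [level a = k] iff [q ^+ k.+1 < a <= q ^+ k], except that [level a = 1] for all
   [a > q ^+ 2]. *)
Definition level (a : R) : nat :=
  if pselect (exists j, (0 < j)%N && (q ^+ j.+1 < a)) is left h then ex_minn h else 0.

Lemma level_spec a : 0 < a ->
  [/\ (0 < level a)%N, q ^+ (level a).+1 < a &
      forall j, (0 < j)%N -> q ^+ j.+1 < a -> (level a <= j)%N].
Proof.
move=> a0; rewrite /level; case: pselect => [h|[]]; last first.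
  have [n hn] := exprn_lt_eps (ltW hrho0) hrho1 a0.
  by exists n.+1; rewrite ltn0Sn (le_lt_trans _ hn) // q_anti // leqW.
by case: ex_minnP => l /andP [l0 hl] hmin; split => // j j0 hj; apply: hmin; rewrite j0.
Qed.

Lemma level_gt0 a : 0 < a -> (0 < level a)%N.
Proof. by case/level_spec. Qed.

Lemma level_uniq a j : (0 < j)%N -> q ^+ j.+1 < a -> ((1 < j)%N -> a <= q ^+ j) ->
  level a = j.
Proof.
move=> j0 hj hj2; have a0 : 0 < a := le_lt_trans (exprn_ge0 _ (ltW hrho0)) hj.
have [l0 hl hmin] := level_spec a0.
apply/eqP; rewrite eqn_leq hmin //= leqNgt; apply/negP => hlt.
have := le_lt_trans (le_trans (hj2 (leq_ltn_trans l0 hlt)) (q_anti hlt)) hl.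
by rewrite ltxx.
Qed.

Lemma level_expr k : (0 < k)%N -> level (q ^+ k) = k.
Proof. by move=> k0; apply: level_uniq => //; rewrite exprSr gtr_pMr ?exprn_gt0. Qed.

Definition annulus (j : nat) (t : K) : K :=
  if (t != 0) && (level (absK t) == j) then 1 else 0.

Lemma annulus_cond_near j a b : absK (a - b) < q ^+ j.+1 ->
  (a != 0) && (level (absK a) == j) -> (b != 0) && (level (absK b) == j).
Proof.
move=> hab /andP [a0 /eqP ha].
have [_ hl _] := level_spec (absK_gt0 a0).
have hb : absK b = absK a by apply: absK_close; apply: lt_trans hab _; rewrite -ha.
rewrite hb ha eqxx andbT; apply: contraTneq (absK_gt0 a0) => b0.
by rewrite -hb b0 absK0 ltxx.
Qed.

Lemma annulus_lc j a b : absK (a - b) < q ^+ j.+1 -> annulus j a = annulus j b.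
Proof.
move=> hab; rewrite /annulus; case: ifP => [/(annulus_cond_near hab) -> //|ha].
by case: ifP => // /(annulus_cond_near (b := a)); rewrite absK_distC ha => /(_ hab).
Qed.

Lemma annulus_bound j t : absK (annulus j t) <= 1.
Proof. by rewrite /annulus; case: ifP; rewrite ?absK1 ?absK0 ?ler01. Qed.

Section Construction.
Variables (E : lmodType K) (d : E -> E -> R).
Hypothesis hE : tvs_metric absK d.
Variables (x : E) (xs ys : nat -> E).
Hypotheses (cxs : d_converges d xs x) (cys : d_converges d ys x).

(* Stated for every [e], vacuously when [e <= 0], so that it can drive the
   recursive definition of [radius]. *)
Lemma exists_half_radius (e : R) : exists del : R, 0 < e ->
  [/\ 0 < del, del <= e / 2 & forall u v, d 0 u < del -> d 0 v < del -> d 0 (u + v) < e].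
Proof.
case: (ltP 0 e) => he; last by exists 0.
have [del d0 h] := add_cont hE 0 0 he.
exists (Num.min del (e / 2)) => _; split.
- by rewrite lt_min d0 divr_gt0.
- by rewrite ge_min lexx orbT.
move=> u v hu hv; have := h u v; rewrite addr0; apply.
  by apply: lt_le_trans hu _; rewrite ge_min lexx.
by apply: lt_le_trans hv _; rewrite ge_min lexx.
Qed.

Fixpoint radius (j : nat) : R :=
  if j is j'.+1 then sval (cid (exists_half_radius (radius j'))) else 1.

Lemma radius_gt0 j : 0 < radius j.
Proof.
elim: j => [|j IH] /=; first exact: ltr01.
by have [] := svalP (cid (exists_half_radius (radius j))) IH.
Qed.

Lemma radiusS j : radius j.+1 <= radius j / 2 /\
  forall u v, d 0 u < radius j.+1 -> d 0 v < radius j.+1 -> d 0 (u + v) < radius j.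
Proof.
by have [_ h1 h2] := svalP (cid (exists_half_radius (radius j))) (radius_gt0 j).
Qed.

Lemma radius_anti i j : (i <= j)%N -> radius j <= radius i.
Proof.
elim: j => [|j IH]; first by rewrite leqn0 => /eqP ->.
rewrite leq_eqVlt => /orP [/eqP -> //|/IH]; apply: le_trans.
by have [h _] := radiusS j; have := radius_gt0 j; lra.
Qed.

Lemma radius_small e : 0 < e -> exists M, radius M <= e.
Proof.
move=> e0; have hb j : radius j <= 2^-1 ^+ j.
  elim: j => [|j IH]; first by rewrite expr0.
  have [h _] := radiusS j; apply: le_trans h _.
  by rewrite exprSr ler_pM2r ?invr_gt0.
have h0 : (0 : R) <= 2^-1 by rewrite invr_ge0.
have h1 : (2^-1 : R) < 1 by rewrite invf_lt1 // ltr1n.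
have [M hM] := exprn_lt_eps h0 h1 e0.
by exists M; apply: le_trans (hb M) (ltW hM).
Qed.

Lemma radius_sum J n (u : nat -> E) : (forall j, (J < j)%N -> d 0 (u j) < radius j) ->
  d 0 (\sum_(J.+1 <= j < J.+1 + n) u j) < radius J.
Proof.
elim: n J => [|n IH] J H; first by rewrite addn0 big_geq // (metric_refl hE) radius_gt0.
rewrite big_ltn ?addnS ?ltnS ?leq_addr //.
have [_ hS] := radiusS J; apply: hS; first exact: H.
by rewrite -addSn; apply: IH => j hj; apply: H; apply: ltn_trans hj.
Qed.

Lemma scale_small (B del : R) : 0 < del -> exists2 eps : R, 0 < eps &
  forall u, d u x < eps -> forall a : K, absK a <= B -> d 0 (a *: (u - x)) < del.
Proof.
move=> d0; have [del1 d1 h1] := scale_cont hE 0 0 d0.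
have B'0 : 0 < Num.max B 1 by rewrite lt_max ltr01 orbT.
have [b b0 hb] := absK_small (divr_gt0 d1 B'0).
have [del3 d3 h3] := scale_cont hE b^-1 0 d1.
have [del4 d4 h4] := add_cont hE x (- x) d3.
exists del4 => // u hu a ha.
have hv : d 0 (b^-1 *: (u - x)) < del1.
  have := h3 b^-1 (u - x); rewrite scaler0; apply; first by rewrite subrr absK0.
  by have := h4 u (- x); rewrite subrr (metric_refl hE) (metric_sym hE); apply.
have -> : a *: (u - x) = (a * b) *: (b^-1 *: (u - x)) by rewrite scalerA mulrK ?unitfE.
have := h1 (a * b) (b^-1 *: (u - x)); rewrite scale0r; apply => //.
have hB : absK a <= Num.max B 1 by rewrite le_max ha.
have : absK b * Num.max B 1 < del1 by rewrite -ltr_pdivlMr.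
by rewrite sub0r absKN absKM; have := absK_ge0 a; have := absK_ge0 b; nra.
Qed.

(* [ddiff (q ^+ j.+1) (annulus j) k] is bounded by [q ^- (j.+1 * k)], hence by
   [coef_bound j] as long as [k <= j]. *)
Definition coef_bound (j : nat) : R := q^-1 ^+ (j.+1 * j).

Lemma exists_tail_index j : exists N, forall n, (N <= n)%N ->
  forall a : K, absK a <= coef_bound j ->
  d 0 (a *: (xs n - x)) < radius j /\ d 0 (a *: (ys n - x)) < radius j.
Proof.
have [eps e0 h] := scale_small (coef_bound j) (radius_gt0 j).
have [Nx hx] := cxs e0; have [Ny hy] := cys e0.
exists (maxn Nx Ny) => n; rewrite geq_max => /andP [hnx hny] a ha.
by split; apply: h => //; [apply: hx | apply: hy].
Qed.

Fixpoint index_seq (j : nat) : nat :=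
  if j is j'.+1 then maxn (index_seq j').+1 (sval (cid (exists_tail_index j))) else 0.

Lemma index_seq_lt : {homo index_seq : i j / (i < j)%N}.
Proof. by apply: homo_ltn ltn_trans _ => j; rewrite /= leq_maxl. Qed.

Definition target (j : nat) : E := if odd j then xs (index_seq j) else ys (index_seq j).

Lemma target_small j a : (0 < j)%N -> absK a <= coef_bound j ->
  d 0 (a *: (target j - x)) < radius j.
Proof.
case: j => // j _ ha.
have [] := svalP (cid (exists_tail_index j.+1)) (index_seq j.+1) (leq_maxr _ _) a ha.
by rewrite /target; case: odd.
Qed.

Definition tlevel (t : K) : nat := if t == 0 then 0%N else level (absK t).

Definition coef (j k : nat) (y : nat -> K) : K := ddiff (q ^+ j.+1) (annulus j) k y.

Definition supp_bound (k : nat) (y : nat -> K) : nat := (\max_(i < k.+1) tlevel (y i)).+1.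

(* The k-th divided difference of the curve [x + \sum_j annulus j t *: (target j - x)];
   only the terms [j < supp_bound k y] can be nonzero. *)
Definition curve_dd (k : nat) (y : nat -> K) : E :=
  (if k is 0 then x else 0) + \sum_(0 <= j < supp_bound k y) coef j k y *: (target j - x).

Lemma coef_eq0 j k y : (supp_bound k y <= j)%N -> coef j k y = 0.
Proof.
move=> hj; apply: ddiff_eq0 => i hi; rewrite /annulus.
case: ifP => // /andP [y0 /eqP hl].
have : (tlevel (y i) < supp_bound k y)%N.
  have hi' : (i < k.+1)%N := hi.
  by rewrite ltnS (leq_bigmax (F := fun i : 'I_k.+1 => tlevel (y i)) (Ordinal hi')).
by rewrite /tlevel (negbTE y0) hl ltnNge hj.
Qed.

Lemma partial_sum_supp k y B : (supp_bound k y <= B)%N ->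
  \sum_(0 <= j < B) coef j k y *: (target j - x) =
  \sum_(0 <= j < supp_bound k y) coef j k y *: (target j - x).
Proof.
move=> hB; rewrite (@big_cat_nat _ _ _ (supp_bound k y) 0 B) //= -[RHS]addr0.
congr (_ + _); rewrite big_nat_cond big1 // => j /andP [/andP [hj _] _].
by rewrite coef_eq0 // scale0r.
Qed.

Lemma eq_curve_dd k y y' : (forall i, (i <= k)%N -> y i = y' i) ->
  curve_dd k y = curve_dd k y'.
Proof.
move=> H; rewrite /curve_dd; have -> : supp_bound k y = supp_bound k y'.
  by congr (_.+1); apply: eq_bigr => i _; rewrite H // -ltnS.
by congr (_ + _); apply: eq_bigr => j _; rewrite /coef (eq_ddiff _ _ H).
Qed.

Lemma curve_dd_big k y B : (supp_bound k y <= B)%N ->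
  curve_dd k y = (if k is 0 then x else 0) + \sum_(0 <= j < B) coef j k y *: (target j - x).
Proof. by move=> hB; rewrite partial_sum_supp. Qed.

Lemma curve_dd_rec k y i : (i <= k)%N ->
  curve_dd k (skip y i) - curve_dd k (skip y i.+1) = (y i.+1 - y i) *: curve_dd k.+1 y.
Proof.
move=> hi.
set B := (supp_bound k (skip y i) + supp_bound k (skip y i.+1) + supp_bound k.+1 y)%N.
rewrite (@curve_dd_big k (skip y i) B); last by rewrite /B; lia.
rewrite (@curve_dd_big k (skip y i.+1) B); last by rewrite /B; lia.
rewrite (@curve_dd_big k.+1 y B) ?leq_addl // add0r opprD addrACA subrr add0r.
rewrite -sumrB scaler_sumr; apply: eq_bigr => j _; rewrite -scalerBl scalerA.
congr (_ *: _); exact: (ddiff_rec (exprn_gt0 _ hrho0) (@annulus_lc j) y hi).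
Qed.

Lemma partial_sum_cont k y0 J :
  cont_at (near_upto k y0) d (fun y => \sum_(0 <= j < J) coef j k y *: (target j - x)) y0.
Proof.
have hm : nbhs_mono (near_upto k y0) := @near_upto_mono _ _.
elim: J => [|J IH].
  by move=> e e0; exists 1 => // y _; rewrite !big_geq // (metric_refl hE).
apply: (cont_at_near hm (G := fun y => \sum_(0 <= j < J) coef j k y *: (target j - x) +
  coef J k y *: (target J - x))); rewrite ?big_nat_recr //.
  by exists 1 => // y _; rewrite big_nat_recr.
apply: (contE_add hE hm IH); apply: (contE_scale hE hm); last exact: contE_cst.
exact: (ddiff_cont (exprn_gt0 _ hrho0) (@annulus_lc J) k y0).
Qed.

Lemma coef_le_bound j k y : (k <= j)%N -> absK (coef j k y) <= coef_bound j.
Proof.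
move=> hkj; apply: le_trans (ddiff_bound (exprn_gt0 _ hrho0) (@annulus_bound j) k y) _.
rewrite -exprVn -exprM; apply: ler_weXn2l; last by rewrite leq_mul2l hkj orbT.
by rewrite invf_ge1 ?exprn_gt0 ?exprn_ile1 ?ltW.
Qed.

Lemma curve_dd_cont k y0 : cont_at (near_upto k y0) d (curve_dd k) y0.
Proof.
move=> e e0.
set S0 := \sum_(0 <= j < supp_bound k y0) coef j k y0 *: (target j - x).
have [del1 d1 h1] := add_cont hE (if k is 0 then x else 0) S0 e0.
have [del2 d2 h2] := add_cont hE S0 0 d1.
have [M hM] := radius_small d2.
set J := maxn (maxn (supp_bound k y0) k) M.
have [del3 d3 h3] := partial_sum_cont k y0 J.+1 d2.
exists del3 => // y hy; set B := maxn J.+1 (supp_bound k y).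
rewrite /curve_dd -(@partial_sum_supp k y B) ?leq_maxr //.
rewrite (@big_cat_nat _ _ _ J.+1 0 B) ?leq_maxl //=.
apply: h1; first by rewrite (metric_refl hE).
rewrite -[S0]addr0; apply: h2.
  have hN0 : (supp_bound k y0 <= J.+1)%N by rewrite leqW // !leq_max leqnn.
  by rewrite /S0 -(partial_sum_supp hN0); apply: h3.
have -> : B = (J.+1 + (B - J.+1))%N by rewrite subnKC // leq_maxl.
apply: lt_le_trans (radius_sum _ _) (le_trans (radius_anti _) hM).
  move=> j hj; apply: target_small; first exact: leq_ltn_trans (leq0n J) hj.
  by apply: coef_le_bound; apply: leq_trans (ltnW hj); rewrite !leq_max leqnn orbT.
by rewrite !leq_max leqnn orbT.
Qed.

Definition curve (t : K) : E := curve_dd 0 (fun _ => t).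

Lemma curve_smooth : smooth_curve absK d curve.
Proof. exact: (ddfamily_smooth hE (@curve_dd_cont) (@eq_curve_dd) (@curve_dd_rec)). Qed.

Lemma curve0 : curve 0 = x.
Proof.
rewrite /curve /curve_dd /supp_bound big_ord1 /tlevel eqxx big_nat1.
by rewrite /coef /= /annulus eqxx scale0r addr0.
Qed.

Lemma curve_nz t : t != 0 -> curve t = target (level (absK t)).
Proof.
move=> t0; rewrite /curve /curve_dd /supp_bound big_ord1 /tlevel (negbTE t0).
rewrite big_nat_recr //= big_nat_cond big1 ?add0r.
  by rewrite /coef /= /annulus t0 eqxx scale1r addrC subrK.
move=> j /andP [/andP [_ hj] _]; rewrite /coef /= /annulus t0 /=.
by rewrite (gtn_eqF hj) scale0r.
Qed.

Lemma curve_absK t s : absK t = absK s -> curve t = curve s.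
Proof.
have [->|t0] := eqVneq t 0; first by rewrite absK0 => /esym/absK_eq0 ->.
have [->|s0] := eqVneq s 0; first by rewrite absK0 => /absK_eq0 t0'; rewrite t0' eqxx in t0.
by move=> hts; rewrite !curve_nz // hts.
Qed.

Lemma curve_image :
  [set curve t | t in [set t : K | t != 0]] =
  [set curve (rho ^+ k) | k in [set k : nat | (0 < k)%N]].
Proof.
have rk0 k : rho ^+ k != 0.
  by rewrite expf_neq0 //; apply: contraTneq hrho0 => ->; rewrite absK0 ltxx.
apply/seteqP; split => _ /= [t ht <-].
  exists (level (absK t)); first exact/level_gt0/absK_gt0.
  by rewrite !curve_nz // absKX level_expr // level_gt0 // absK_gt0.
by exists (rho ^+ t).
Qed.

End Construction.

End Annuli.

End UltrametricField.

Unset Implicit Arguments.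

Theorem lemma11p1 (K : fieldType) (R : realType) (absK : K -> R)
  (hK : ultrametric_abs absK) (rho : K) (hrho0 : 0 < absK rho) (hrho1 : absK rho < 1)
  (E : lmodType K) (d : E -> E -> R) (hE : tvs_metric absK d)
  (U : set E) (hU : d_open d U) (x : E) (hx : U x)
  (xs ys : nat -> E)
  (hxs : forall n : nat, (0 < n)%N -> U (xs n))
  (hys : forall n : nat, (0 < n)%N -> U (ys n))
  (cxs : d_converges d xs x) (cys : d_converges d ys x) :
  exists (m : nat -> nat) (c : K -> E),
    [/\ [/\ (forall k : nat, (0 < k)%N -> (0 < m k)%N),
        (forall k l : nat, (0 < k)%N -> (0 < l)%N -> m k = m l -> k = l) &
        (forall k l : nat, (0 < k)%N -> (k <= l)%N -> (m k <= m l)%N)],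
        smooth_curve absK d c,
        (forall t : K, U (c t)) &
    [/\ [/\ (forall k : nat, (0 < k)%N -> odd k -> c (rho ^+ k) = xs (m k)),
        (forall k : nat, (0 < k)%N -> ~~ odd k -> c (rho ^+ k) = ys (m k)) &
        c 0 = x],
        (forall t : K, t != 0 -> exists2 r : R, 0 < r &
           forall s : K, s != 0 -> absK (s - t) < r -> c s = c t),
        (forall t s : K, absK t = absK s -> c t = c s) &
        [set c t | t in [set t : K | t != 0]] =
        [set c (rho ^+ k) | k in [set k : nat | (0 < k)%N]]]].
Proof.
pose m := index_seq hK rho hE cxs cys.
pose c := curve hK rho hE cxs cys.
have m_lt : {homo m : i j / (i < j)%N} := index_seq_lt hK rho hE cxs cys.
have c_pow k : (0 < k)%N -> c (rho ^+ k) = target hK rho hE cxs cys k.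
  move=> k0; have rho0 : rho != 0 by apply: contraTneq hrho0 => ->; rewrite (absK0 hK) ltxx.
  by rewrite /c curve_nz ?expf_neq0 // (absKX hK) level_expr.
exists m, c; split; [split| | |split; [split| | |]].
- by move=> k k0; apply: (m_lt 0%N).
- by move=> k l _ _; apply: (incn_inj (leq_mono m_lt)).
- by move=> k l _; rewrite (leq_mono m_lt).
- exact: curve_smooth.
- move=> t; have [->|t0] := eqVneq t 0; first by rewrite /c curve0.
  have l0 := level_gt0 hrho0 hrho1 (absK_gt0 hK t0).
  rewrite /c curve_nz // /target.
  by case: odd; [apply: hxs | apply: hys]; apply: (m_lt 0%N).
- by move=> k k0 hk; rewrite c_pow // /target hk.
- by move=> k k0 hk; rewrite c_pow // /target (negbTE hk).
- exact: curve0.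
- move=> t t0; exists (absK t); first exact: absK_gt0.
  by move=> s _ hs; apply: curve_absK; apply: (absK_close hK); rewrite absK_distC.
- exact: curve_absK.
- exact: curve_image.
Qed.
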